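(* If $f(z)=z+\sum_{n\ge2}a_nz^n$ belongs to $\mathcal{H}_{\sigma}$, then $|a_2a_4-a_3^2|\le\frac{3}{2}$.
   Context: $\mathbb{U}=\{z\in\mathbb{C}:|z|<1\}$. $\sigma$ denotes the class of analytic functions $f(z)=z+\sum_{n\ge2}a_nz^n$ on $\mathbb{U}$ that are univalent in $\mathbb{U}$ and whose inverse $g=f^{-1}$ is also univalent in $\mathbb{U}$. $\mathcal{H}_{\sigma}$ is the set of $f\in\sigma$ with $\operatorname{Re} f'(z)>0$ for $z\in\mathbb{U}$ and $\operatorname{Re} g'(w)>0$ for $w\in\mathbb{U}$, where $g=f^{-1}$ (equivalently, $f'(z)\prec\frac{1+z}{1-z}$ and $g'(w)\prec\frac{1+w}{1-w}$). *)

From Stdlib Require Import Reals.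
From Coquelicot Require Import Coquelicot.
Open Scope R_scope.

Definition in_U (z : C) : Prop := Cmod z < 1.

Definition holomorphic_on_U (f : C -> C) : Prop :=
  forall z, in_U z -> ex_derive (K := C_AbsRing) (V := C_NormedModule) f z.

Definition univalent_on_U (f : C -> C) : Prop :=
  holomorphic_on_U f /\
  (forall z1 z2, in_U z1 -> in_U z2 -> f z1 = f z2 -> z1 = z2).

(* f(z) = z + sum_{n>=2} a_n z^n on U, encoded by coefficients a with
   a 0 = 0, a 1 = 1 and the power series converging to f z on U. *)
Definition normalized_series (a : nat -> C) (f : C -> C) : Prop :=
  a 0%nat = 0%C /\ a 1%nat = 1%C /\
  forall z, in_U z -> is_series (V := C_NormedModule) (fun n => (a n * z ^ n)%C) (f z).

(* g is (the analytic continuation to U of) the inverse of f: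
   near 0 it is the inverse of f (with values in U). *)
Definition inverse_near_0 (f g : C -> C) : Prop :=
  exists r, 0 < r /\ forall w, Cmod w < r -> in_U (g w) /\ f (g w) = w.

Definition in_sigma (a : nat -> C) (f : C -> C) : Prop :=
  normalized_series a f /\ univalent_on_U f /\
  exists g, inverse_near_0 f g /\ univalent_on_U g.

Definition Re_deriv_pos_on_U (h : C -> C) : Prop :=
  forall z, in_U z -> exists l : C,
    is_derive (K := C_AbsRing) (V := C_NormedModule) h z l /\ 0 < Re l.

Definition in_H_sigma (a : nat -> C) (f : C -> C) : Prop :=
  normalized_series a f /\ univalent_on_U f /\ Re_deriv_pos_on_U f /\
  exists g, inverse_near_0 f g /\ univalent_on_U g /\ Re_deriv_pos_on_U g.

From Stdlib Require Import Reals Lra Lia Psatz.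
From Coquelicot Require Import Coquelicot.
Open Scope R_scope.

(* For 0 < s < 1 the difference quotient
   (f(z) - f(sz)) / (z - sz) has positive real part on the disk (mean value
   theorem along the segment [sz, z]), and its Taylor coefficients are
   a_(m+1) (1 + s + ... + s^m).  A Caratheodory estimate bounds them by 2 s^-m;
   it is proved by averaging over N-th roots of unity with the nonnegative
   weight 1 + Re(c w^n), in place of the usual integral over the circle.
   Letting s -> 1 gives |a_n| <= 2/n, hence
   |a2 a4 - a3^2| <= |a2| |a4| + |a3|^2 <= 1/2 + 4/9. *)

Lemma sum_n_Re (u : nat -> C) N : sum_n (fun n => Re (u n)) N = Re (sum_n u N).
Proof. induction N; [now rewrite !sum_O | now rewrite !sum_Sn, IHN]. Qed.

Lemma is_series_Re (u : nat -> C) l : is_series (V := C_NormedModule) u l ->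
  is_series (fun n => Re (u n)) (Re l).
Proof.
  intros Hu. apply filterlim_locally. intros eps.
  destruct (proj1 (filterlim_locally (F := eventually) (sum_n u) l) Hu eps) as [N HN].
  exists N. intros m Hm. destruct (HN m Hm) as [HRe _]. now rewrite sum_n_Re.
Qed.

Lemma is_series_terms_bounded (u : nat -> C) l : is_series (V := C_NormedModule) u l ->
  exists K, forall m, (K <= m)%nat -> Cmod (u m) <= 1.
Proof.
  intros Hu.
  assert (Hhalf : 0 < / 2) by lra.
  destruct (proj1 (filterlim_locally_ball_norm (sum_n u) l) Hu (mkposreal _ Hhalf))
    as [K HK].
  exists (S K). intros [|m] Hm; [lia|].
  assert (Hm' : u (S m) = ((sum_n u (S m) - l) - (sum_n u m - l))%C).
  { rewrite sum_Sn. change (plus (sum_n u m) (u (S m))) with (sum_n u m + u (S m))%C. ring. }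
  rewrite Hm'. unfold Cminus at 1. eapply Rle_trans; [apply Cmod_triangle|].
  rewrite Cmod_opp.
  assert (H1 := HK (S m) ltac:(lia)). assert (H2 := HK m ltac:(lia)).
  unfold ball_norm in H1, H2.
  change (Cmod (sum_n u (S m) - l)%C < / 2) in H1.
  change (Cmod (sum_n u m - l)%C < / 2) in H2. lra.
Qed.

Lemma ex_series_Cmod_pow (a : nat -> C) (rho r : R) l : 0 <= r < rho ->
  is_series (V := C_NormedModule) (fun n => (a n * RtoC rho ^ n)%C) l ->
  ex_series (fun n => Cmod (a n) * r ^ n).
Proof.
  intros Hr Hl.
  destruct (is_series_terms_bounded _ _ Hl) as [K HK].
  apply (ex_series_incr_n _ K).
  set (q := r / rho).
  assert (Hq : 0 <= q < 1).
  { unfold q. split; [apply Rdiv_le_0_compat; lra|].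
    apply (Rmult_lt_reg_r rho); [lra|]. field_simplify; lra. }
  apply (ex_series_le (K := R_AbsRing) (V := R_CompleteNormedModule) _
    (fun k => q ^ K * q ^ k)).
  - intros k. cbv beta. rewrite <- (pow_add q).
    specialize (HK (K + k)%nat ltac:(lia)).
    rewrite Cmod_mult, Cmod_pow, Cmod_R, Rabs_pos_eq in HK by lra.
    change (norm _) with (Rabs (Cmod (a (K + k)%nat) * r ^ (K + k))).
    assert (0 <= Cmod (a (K + k)%nat)) by apply Cmod_ge_0.
    assert (0 <= q ^ (K + k)) by (apply pow_le; lra).
    replace r with (q * rho) by (unfold q; field; lra).
    assert (0 <= rho ^ (K + k)) by (apply pow_le; lra).
    rewrite Rpow_mult_distr, Rabs_pos_eq by (apply Rmult_le_pos; nra).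
    nra.
  - apply (ex_series_scal (K := R_AbsRing) (V := R_NormedModule) (q ^ K) (fun k => q ^ k)).
    apply ex_series_geom. rewrite Rabs_pos_eq; lra.
Qed.

Lemma is_series_zero {K : AbsRing} {V : NormedModule K} : is_series (fun _ : nat => @zero V) zero.
Proof.
  apply (filterlim_ext (fun _ => zero)); [|apply filterlim_const].
  intros n. induction n as [|n IH]; [now rewrite sum_O|].
  now rewrite sum_Sn, <- IH, plus_zero_r.
Qed.

Lemma is_series_tail (a : nat -> R) (l : R) M : (0 < M)%nat -> is_series a l ->
  is_series (fun k => a (M + k)%nat) (l - sum_n a (pred M)).
Proof.
  intros HM Hl. apply is_series_incr_n; [exact HM|].
  match goal with |- is_series _ ?l' => replace l' with l; [exact Hl|] end.
  unfold plus; simpl. rewrite Rplus_comm. symmetry. apply Rplus_minus.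
Qed.

Lemma is_series_le (a b : nat -> R) (la lb : R) : is_series a la -> is_series b lb ->
  (forall k, a k <= b k) -> la <= lb.
Proof.
  intros Ha Hb Hab.
  apply (is_lim_seq_le (sum_n a) (sum_n b) la lb); [|exact Ha|exact Hb].
  intros N. rewrite !sum_n_Reals. apply sum_Rle. auto.
Qed.

Fixpoint csum (F : nat -> C) (N : nat) : C :=
  match N with O => 0%C | S N => (csum F N + F N)%C end.

Lemma csum_ext (F G : nat -> C) N : (forall k, (k < N)%nat -> F k = G k) ->
  csum F N = csum G N.
Proof. induction N; intros H; simpl; auto. rewrite IHN, H; auto. Qed.

Lemma csum_plus (F G : nat -> C) N : csum (fun k => F k + G k)%C N = (csum F N + csum G N)%C.
Proof. induction N; simpl; [ring | rewrite IHN; ring]. Qed.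

Lemma csum_mult_l (c : C) (F : nat -> C) N : csum (fun k => c * F k)%C N = (c * csum F N)%C.
Proof. induction N; simpl; [ring | rewrite IHN; ring]. Qed.

Lemma csum_1 N : csum (fun _ => 1%C) N = RtoC (INR N).
Proof. induction N; [reflexivity|]. cbn [csum]. now rewrite IHN, S_INR, RtoC_plus. Qed.

Lemma csum_geom (x : C) N : ((x - 1) * csum (fun k => x ^ k) N = x ^ N - 1)%C.
Proof. induction N; simpl; [ring|]. rewrite Cmult_plus_distr_l, IHN. ring. Qed.

Lemma csum_geom_root (x : C) N : (x ^ N = 1)%C -> x <> 1%C -> csum (fun k => x ^ k)%C N = 0%C.
Proof.
  intros HN Hx.
  assert (Hx1 : (x - 1)%C <> 0%C) by now apply Cminus_eq_contra.
  transitivity (/ (x - 1) * ((x - 1) * csum (fun k => x ^ k) N))%C; [field; exact Hx1|].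
  rewrite csum_geom, HN. ring.
Qed.

Lemma Cmod_csum_le (F : nat -> C) (B : R) N : (forall k, (k < N)%nat -> Cmod (F k) <= B) ->
  Cmod (csum F N) <= INR N * B.
Proof.
  induction N as [|N IH]; intros HF; simpl csum.
  - rewrite Cmod_0. simpl. lra.
  - eapply Rle_trans; [apply Cmod_triangle|]. rewrite S_INR.
    assert (Cmod (csum F N) <= INR N * B) by (apply IH; auto).
    assert (Cmod (F N) <= B) by auto. lra.
Qed.

Lemma is_series_csum_Re_nonneg (G : nat -> nat -> C) N :
  (forall k, (k < N)%nat -> exists v, is_series (V := C_NormedModule) (G k) v /\ 0 <= Re v) ->
  exists S, is_series (V := C_NormedModule) (fun m => csum (fun k => G k m) N) S /\ 0 <= Re S.
Proof.
  induction N as [|N IH]; intros HG.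
  - exists zero. split; [|simpl; lra].
    exact is_series_zero.
  - destruct IH as [S [HS HS0]]; [auto|].
    destruct (HG N ltac:(lia)) as [v [Hv Hv0]].
    exists (plus S v). split; [exact (is_series_plus _ _ _ _ HS Hv)|].
    destruct S, v. unfold Re in *. simpl in *. lra.
Qed.

(** * Roots of unity *)

Definition cis (t : R) : C := (cos t, sin t).

Lemma cis_add (a b : R) : (cis a * cis b)%C = cis (a + b).
Proof.
  unfold cis, Cmult; simpl. rewrite cos_plus, sin_plus.
  apply injective_projections; simpl; ring.
Qed.

Lemma cis_pow (a : R) (k : nat) : (cis a ^ k)%C = cis (INR k * a).
Proof.
  induction k as [|k IH].
  - simpl. unfold cis. now rewrite Rmult_0_l, cos_0, sin_0.
  - rewrite Cpow_S, IH, cis_add, S_INR. f_equal. ring.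
Qed.

Lemma Cconj_cis (a : R) : Cconj (cis a) = cis (- a).
Proof. unfold cis, Cconj; simpl. now rewrite cos_neg, sin_neg. Qed.

Lemma Cmod_cis (a : R) : Cmod (cis a) = 1.
Proof.
  assert (H := sin2_cos2 a). unfold Rsqr in H. unfold Cmod, cis; simpl.
  replace (cos a * (cos a * 1) + sin a * (sin a * 1)) with 1 by nra. apply sqrt_1.
Qed.

Lemma cis_2PI_mult (j : nat) : cis (2 * PI * INR j) = 1%C.
Proof.
  rewrite Rmult_comm, <- cis_pow. unfold cis. rewrite cos_2PI, sin_2PI. apply Cpow_1_l.
Qed.

Lemma cis_neq_1_pos (t : R) : 0 < t < 2 * PI -> cis t <> 1%C.
Proof.
  intros Ht E. unfold cis in E. injection E as Ecos Esin.
  destruct (Rtotal_order t PI) as [Hlt | [Heq | Hgt]].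
  - assert (0 < sin t) by (apply sin_gt_0; lra). lra.
  - subst t. rewrite cos_PI in Ecos. lra.
  - assert (sin t < 0) by (apply sin_lt_0; lra). lra.
Qed.

Lemma cis_neq_1 (t : R) : t <> 0 -> - (2 * PI) < t < 2 * PI -> cis t <> 1%C.
Proof.
  intros Ht0 Ht E. destruct (Rlt_or_le 0 t) as [Hpos | Hneg].
  - exact (cis_neq_1_pos t ltac:(lra) E).
  - apply (cis_neq_1_pos (- t)); [lra|].
    rewrite <- Cconj_cis, E. apply injective_projections; simpl; ring.
Qed.

Definition unit_root (N k : nat) : C := cis (2 * PI * INR k / INR N).

Lemma csum_unit_root_orthogonal N m n : (m < N)%nat -> (n < N)%nat ->
  csum (fun k => unit_root N k ^ m * Cconj (unit_root N k ^ n))%C N =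
  if (m =? n)%nat then RtoC (INR N) else 0%C.
Proof.
  intros Hm Hn.
  assert (HN : 0 < INR N) by (apply lt_0_INR; lia).
  set (x := (INR m - INR n) / INR N).
  set (theta := 2 * PI * x).
  rewrite (csum_ext _ (fun k => cis theta ^ k)%C).
  2:{ intros k _. unfold unit_root. rewrite !cis_pow, Cconj_cis, cis_add.
      f_equal. unfold theta. unfold x. field. lra. }
  destruct (Nat.eqb_spec m n) as [-> | Hmn].
  - rewrite <- csum_1. apply csum_ext. intros k _.
    replace theta with 0 by (unfold theta, x; field_simplify; lra).
    unfold cis. rewrite cos_0, sin_0. apply Cpow_1_l.
  - apply csum_geom_root.
    + rewrite cis_pow. replace (INR N * theta) with (2 * PI * INR m + - (2 * PI * INR n))
        by (unfold theta, x; field; lra).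
      rewrite <- cis_add, <- Cconj_cis, !cis_2PI_mult.
      apply injective_projections; simpl; ring.
    + assert (Hmn' : INR m <> INR n) by now apply not_INR.
      assert (Hm' : INR m < INR N) by now apply lt_INR.
      assert (Hn' : INR n < INR N) by now apply lt_INR.
      assert (0 <= INR m) by apply pos_INR. assert (0 <= INR n) by apply pos_INR.
      assert (Hx0 : x <> 0).
      { unfold x. intros E. apply Hmn'. apply Rmult_integral in E as [E | E].
        - lra.
        - exfalso. apply Rinv_neq_0_compat in E; lra. }
      assert (Hx : -1 < x < 1).
      { unfold x. split; [apply Rlt_div_r | apply Rlt_div_l]; lra. }
      assert (HPI := PI_RGT_0).
      apply cis_neq_1; unfold theta; [intros E; apply Hx0; nra | nra].
Qed.

(** * Positive derivative and difference quotients *)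

Lemma is_derive_C_approx (f : C -> C) (z0 l : C) :
  is_derive (K := C_AbsRing) (V := C_NormedModule) f z0 l ->
  forall eps : posreal, exists delta : posreal, forall y, Cmod (y - z0) < delta ->
    Cmod (f y - f z0 - (y - z0) * l) <= eps * Cmod (y - z0).
Proof.
  intros [_ Hd] eps.
  assert (Hlim : is_filter_lim (T := AbsRing_UniformSpace C_AbsRing)
    (@locally (AbsRing_UniformSpace C_AbsRing) z0) z0) by (intros P HP; exact HP).
  destruct (Hd z0 Hlim eps) as [delta Hdelta].
  exists delta. intros y Hy. exact (Hdelta y Hy).
Qed.

Lemma is_derive_Re_line (f : C -> C) (w v l : C) (t0 : R) : v <> 0%C ->
  is_derive (K := C_AbsRing) (V := C_NormedModule) f (w + RtoC t0 * v)%C l ->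
  is_derive (fun t => Re (f (w + RtoC t * v) / v)%C) t0 (Re l).
Proof.
  intros Hv Hf. apply is_derive_Reals. intros eps Heps.
  assert (HD : 0 < Cmod v) by now apply Cmod_gt_0.
  assert (He : 0 < eps / 2) by lra.
  destruct (is_derive_C_approx f _ l Hf (mkposreal _ He)) as [delta Hdelta]; simpl in Hdelta.
  assert (Hdh : 0 < delta / Cmod v) by (apply Rdiv_lt_0_compat; [apply cond_pos | lra]).
  exists (mkposreal _ Hdh). intros h Hh0 Hh. simpl in Hh.
  set (z0 := (w + RtoC t0 * v)%C).
  set (y := (w + RtoC (t0 + h) * v)%C).
  assert (Hyz : (y - z0)%C = (RtoC h * v)%C) by (unfold y, z0; rewrite RtoC_plus; ring).
  assert (Hhv : Cmod (y - z0) = Rabs h * Cmod v) by now rewrite Hyz, Cmod_mult, Cmod_R.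
  assert (Hy : Cmod (y - z0) < delta).
  { rewrite Hhv. apply (Rmult_lt_reg_r (/ Cmod v)); [now apply Rinv_0_lt_compat|].
    rewrite Rmult_assoc, Rinv_r, Rmult_1_r by lra. exact Hh. }
  set (E := (f y - f z0 - (y - z0) * l)%C).
  assert (HE : Cmod (E / v) <= eps / 2 * Rabs h).
  { rewrite Cmod_div by exact Hv. apply (Rmult_le_reg_r (Cmod v)); [lra|].
    unfold Rdiv at 1. rewrite Rmult_assoc, Rinv_l, Rmult_1_r, Rmult_assoc, <- Hhv by lra.
    exact (Hdelta y Hy). }
  replace ((Re (f y / v)%C - Re (f z0 / v)%C) / h - Re l) with (Re (E / v)%C / h).
  2:{ assert (HQ : (E / v = f y / v - f z0 / v - RtoC h * l)%C)
        by (unfold E; rewrite Hyz; field; exact Hv).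
      rewrite HQ. destruct (f y / v)%C, (f z0 / v)%C, l. unfold Re; simpl. field. exact Hh0. }
  assert (Hh1 : 0 < Rabs h) by now apply Rabs_pos_lt.
  unfold Rdiv. rewrite Rabs_mult, Rabs_inv.
  apply (Rmult_lt_reg_r (Rabs h)); [lra|]. rewrite Rmult_assoc, Rinv_l by lra.
  assert (HR := re_le_Cmod (E / v)%C). nra.
Qed.

Lemma in_U_segment (z w : C) (t : R) : in_U z -> in_U w -> 0 <= t <= 1 ->
  in_U (w + RtoC t * (z - w))%C.
Proof.
  unfold in_U. intros Hz Hw Ht.
  replace (w + RtoC t * (z - w))%C with (RtoC (1 - t) * w + RtoC t * z)%C
    by (rewrite RtoC_minus; ring).
  eapply Rle_lt_trans; [apply Cmod_triangle|].
  rewrite !Cmod_mult, !Cmod_R, !Rabs_pos_eq by lra.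
  assert (0 <= t * (1 - Cmod z)) by (apply Rmult_le_pos; lra).
  assert (0 <= (1 - t) * (1 - Cmod w)) by (apply Rmult_le_pos; lra).
  nra.
Qed.

Lemma Re_diffquot_pos (f : C -> C) : Re_deriv_pos_on_U f ->
  forall z w, in_U z -> in_U w -> z <> w -> 0 < Re ((f z - f w) / (z - w))%C.
Proof.
  intros Hf z w Hz Hw Hzw.
  assert (Hv : (z - w)%C <> 0%C).
  { intros E. apply Hzw. replace z with (z - w + w)%C by ring. rewrite E. ring. }
  set (phi := fun t => Re (f (w + RtoC t * (z - w)) / (z - w))%C).
  assert (Hphi' : forall t, 0 <= t <= 1 -> exists l, is_derive phi t l /\ 0 < l).
  { intros t Ht. destruct (Hf _ (in_U_segment z w t Hz Hw Ht)) as [l [Hl Hlpos]].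
    exists (Re l). split; [now apply is_derive_Re_line | exact Hlpos]. }
  destruct (MVT_gen phi 0 1 (Derive phi)) as [c [Hc Hmvt]];
    rewrite ?Rmin_left, ?Rmax_right in * by lra.
  - intros t Ht. destruct (Hphi' t ltac:(lra)) as [l [Hl _]].
    apply Derive_correct. now exists l.
  - intros t Ht. destruct (Hphi' t Ht) as [l [Hl _]].
    apply derivable_continuous_pt, ex_derive_Reals_0. now exists l.
  - destruct (Hphi' c Hc) as [l [Hl Hlpos]].
    rewrite (is_derive_unique _ _ _ Hl) in Hmvt.
    replace (Re ((f z - f w) / (z - w))%C) with (phi 1 - phi 0); [nra|].
    unfold phi. replace (w + RtoC 1 * (z - w))%C with z by ring.
    replace (w + RtoC 0 * (z - w))%C with w by ring.
    replace ((f z - f w) / (z - w))%C with (f z / (z - w) - f w / (z - w))%C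
      by (field; exact Hv).
    destruct (f z / (z - w))%C, (f w / (z - w))%C. unfold Re; simpl. ring.
Qed.

(** * A Caratheodory coefficient estimate *)

Section Caratheodory.

Variables (d : nat -> C) (n : nat) (r : R).
Hypothesis n_pos : (1 <= n)%nat.
Hypothesis r_ge0 : 0 <= r.
Hypothesis Re_nonneg_on_circle : forall z, Cmod z = r ->
  exists v, is_series (V := C_NormedModule) (fun m => (d m * z ^ m)%C) v /\ 0 <= Re v.
Variable N : nat.
Hypothesis N_large : (2 * n < N)%nat.
Variable c : C.
Hypothesis Cmod_c : Cmod c = 1.

(* [t m] is the m-th coefficient of the nonnegative average
   sum_(k < N) weight k * Re P(r u_k), where P(z) = sum_m d_m z^m.  By orthogonality
   of the N-th roots of unity, among the m < N - n only m = 0 and m = n survive;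
   for conj(c) d_n = -|d_n| the latter is -(N/2) |d_n| r^n. *)
Let u k := unit_root N k.
Let weight k := 1 + Re (c * u k ^ n).
Let t m := Re (csum (fun k => RtoC (weight k) * (d m * (RtoC r * u k) ^ m)) N)%C.
Let ortho m p := csum (fun k => u k ^ m * Cconj (u k ^ p))%C N.

Lemma Cmod_unit_root_pow k p : Cmod (u k ^ p) = 1.
Proof. unfold u, unit_root. now rewrite Cmod_pow, Cmod_cis, pow1. Qed.

Lemma weight_bounds k : 0 <= weight k <= 2.
Proof.
  assert (H := re_le_Cmod (c * u k ^ n)%C).
  rewrite Cmod_mult, Cmod_c, Cmod_unit_root_pow, Rmult_1_l in H.
  apply Rabs_le_between in H. unfold weight. lra.
Qed.

Lemma t_series : exists S, is_series t S /\ 0 <= S.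
Proof.
  destruct (is_series_csum_Re_nonneg
    (fun k m => RtoC (weight k) * (d m * (RtoC r * u k) ^ m))%C N) as [S [HS HS0]].
  - intros k _.
    destruct (Re_nonneg_on_circle (RtoC r * u k)%C) as [v [Hv Hv0]].
    { unfold u, unit_root. now rewrite Cmod_mult, Cmod_R, Rabs_pos_eq, Cmod_cis, Rmult_1_r. }
    exists (RtoC (weight k) * v)%C. split; [exact (is_series_scal _ _ _ Hv)|].
    assert (Hw := weight_bounds k).
    destruct v as [v1 v2]. unfold Re in *. simpl in *. nra.
  - exists (Re S). split; [exact (is_series_Re _ _ HS) | exact HS0].
Qed.

Lemma t_bound m : Rabs (t m) <= 2 * INR N * (Cmod (d m) * r ^ m).
Proof.
  eapply Rle_trans; [apply re_le_Cmod|].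
  replace (2 * INR N * (Cmod (d m) * r ^ m)) with (INR N * (2 * (Cmod (d m) * r ^ m))) by ring.
  apply Cmod_csum_le. intros k _.
  assert (Hw := weight_bounds k).
  unfold u, unit_root.
  rewrite !Cmod_mult, Cmod_pow, Cmod_mult, !Cmod_R, Cmod_cis, !Rabs_pos_eq by lra.
  rewrite Rmult_1_r.
  assert (0 <= Cmod (d m) * r ^ m) by (apply Rmult_le_pos; [apply Cmod_ge_0 | apply pow_le; lra]).
  nra.
Qed.

Lemma t_expand m : t m = Re (d m * RtoC (r ^ m) *
  (ortho m 0 + c / 2 * ortho (m + n) 0 + Cconj c / 2 * ortho m n))%C.
Proof.
  unfold t, ortho. f_equal.
  rewrite <- !csum_mult_l, <- !csum_plus, <- csum_mult_l. apply csum_ext. intros k _.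
  assert (Hconj1 : Cconj (u k ^ 0) = 1%C) by (apply injective_projections; simpl; ring).
  unfold weight. rewrite Hconj1, RtoC_plus, re_alt, Cmult_conj, Cpow_mult_l, RtoC_pow, Cpow_add_r.
  field.
Qed.

Lemma ortho_eq m p : (m < N)%nat -> (p < N)%nat ->
  ortho m p = if (m =? p)%nat then RtoC (INR N) else 0%C.
Proof. apply csum_unit_root_orthogonal. Qed.

Lemma t_0 : t 0 = INR N * Re (d 0%nat).
Proof.
  rewrite t_expand, !ortho_eq, Nat.eqb_refl, !(proj2 (Nat.eqb_neq _ _)) by lia.
  replace (d 0%nat * RtoC (r ^ 0) * (RtoC (INR N) + c / 2 * 0 + Cconj c / 2 * 0))%C
    with (RtoC (INR N) * d 0%nat)%C by (rewrite pow_O; field).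
  destruct (d 0%nat). unfold Re; simpl. ring.
Qed.

Lemma t_n : (Cconj c * d n)%C = RtoC (- Cmod (d n)) ->
  t n = - (INR N / 2) * (Cmod (d n) * r ^ n).
Proof.
  intros Hcd.
  rewrite t_expand, !ortho_eq, Nat.eqb_refl, !(proj2 (Nat.eqb_neq _ _)) by lia.
  replace (d n * RtoC (r ^ n) * (0 + c / 2 * 0 + Cconj c / 2 * RtoC (INR N)))%C
    with (Cconj c * d n * RtoC (r ^ n) * RtoC (INR N) / 2)%C by field.
  rewrite Hcd. unfold Re; simpl. field.
Qed.

Lemma t_vanish m : (0 < m)%nat -> (m + n < N)%nat -> m <> n -> t m = 0.
Proof.
  intros Hm HmN Hmn. rewrite t_expand, !ortho_eq, !(proj2 (Nat.eqb_neq _ _)) by lia.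
  replace (d m * RtoC (r ^ m) * (0 + c / 2 * 0 + Cconj c / 2 * 0))%C with (RtoC 0) by ring.
  reflexivity.
Qed.

Lemma sum_n_t_head j : (j + n < N)%nat ->
  sum_n t j = t 0 + (if (n <=? j)%nat then t n else 0).
Proof.
  induction j as [|j IH]; intros Hj.
  - rewrite sum_O, (proj2 (Nat.leb_gt n 0)) by lia. now rewrite Rplus_0_r.
  - rewrite sum_Sn, IH by lia. change plus with Rplus.
    destruct (Nat.eq_dec (S j) n) as [<- | Hjn].
    + rewrite (proj2 (Nat.leb_gt (S j) j)), Nat.leb_refl by lia. lra.
    + rewrite (t_vanish (S j)) by lia.
      destruct (Nat.leb_spec n j); destruct (Nat.leb_spec n (S j)); try lia; lra.
Qed.

Lemma t_series_lower_bound : (Cconj c * d n)%C = RtoC (- Cmod (d n)) ->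
  forall L, is_series (fun m => Cmod (d m) * r ^ m) L ->
  0 <= INR N * Re (d 0%nat) - INR N / 2 * (Cmod (d n) * r ^ n) +
       2 * INR N * (L - sum_n (fun m => Cmod (d m) * r ^ m) (pred (N - n))).
Proof.
  intros Hcd L HL.
  destruct t_series as [S [HS HS0]].
  set (M := (N - n)%nat).
  set (g := fun m => Cmod (d m) * r ^ m) in *.
  assert (HM : (0 < M)%nat) by (unfold M; lia).
  assert (Htail_t := is_series_tail t S M HM HS).
  assert (Htail_g : is_series (fun k => 2 * INR N * g (M + k)%nat)
                              (2 * INR N * (L - sum_n g (pred M))))
    by exact (is_series_scal (2 * INR N) _ _ (is_series_tail g L M HM HL)).
  assert (Htail : S - sum_n t (pred M) <= 2 * INR N * (L - sum_n g (pred M))).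
  { apply (is_series_le _ _ _ _ Htail_t Htail_g). intros k.
    apply Rabs_le_between, t_bound. }
  rewrite sum_n_t_head, (proj2 (Nat.leb_le n (pred M))), t_0, (t_n Hcd) in Htail
    by (unfold M; lia).
  fold M g. lra.
Qed.

End Caratheodory.

Lemma exists_unit_rotation (z : C) : exists c, Cmod c = 1 /\ (Cconj c * z)%C = RtoC (- Cmod z).
Proof.
  destruct (Ceq_dec z 0%C) as [-> | Hz].
  - exists 1%C. split; [apply Cmod_1|]. rewrite Cmod_0. apply injective_projections; simpl; ring.
  - assert (Hm : 0 < Cmod z) by now apply Cmod_gt_0.
    exists (RtoC (- / Cmod z) * z)%C. split.
    + rewrite Cmod_mult, Cmod_R, Rabs_Ropp, Rabs_pos_eq by (apply Rlt_le, Rinv_0_lt_compat, Hm).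
      field. lra.
    + assert (Hconj : Cconj (RtoC (- / Cmod z)) = RtoC (- / Cmod z))
        by (apply injective_projections; simpl; ring).
      rewrite Cmult_conj, Hconj, <- Cmult_assoc, (Cmult_comm (Cconj z)), <- Cmod2_conj,
        <- RtoC_mult.
      f_equal. field. lra.
Qed.

Theorem Caratheodory_coef_bound (d : nat -> C) (n : nat) (r : R) :
  (1 <= n)%nat -> 0 <= r ->
  (forall z, Cmod z = r -> exists v,
     is_series (V := C_NormedModule) (fun m => (d m * z ^ m)%C) v /\ 0 <= Re v) ->
  ex_series (fun m => Cmod (d m) * r ^ m) ->
  Cmod (d n) * r ^ n <= 2 * Re (d 0%nat).
Proof.
  intros Hn Hr Hpos [L HL].
  destruct (exists_unit_rotation (d n)) as [c [Hc Hcd]].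
  apply Rle_plus_epsilon. intros eps Heps.
  assert (Heps4 : 0 < eps / 4) by lra.
  destruct (proj1 (filterlim_locally (F := eventually) _ L) HL (mkposreal _ Heps4)) as [N0 HN0].
  set (N := (N0 + 2 * n + 1)%nat).
  assert (Hineq := t_series_lower_bound d n r Hn Hr Hpos N ltac:(unfold N; lia) c Hc Hcd L HL).
  specialize (HN0 (pred (N - n)) ltac:(unfold N; lia)).
  change (Rabs (sum_n (fun m => Cmod (d m) * r ^ m) (pred (N - n)) - L) < eps / 4) in HN0.
  apply Rabs_lt_between' in HN0.
  assert (HNpos : 0 < INR N) by (apply lt_0_INR; unfold N; lia).
  set (s := sum_n (fun m => Cmod (d m) * r ^ m) (pred (N - n))) in *.
  nra.
Qed.

(** * Coefficient bounds for functions with Re f' > 0 *)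

Lemma pow_ge_1_sub (s : R) k : 0 <= s <= 1 -> 1 - INR k * (1 - s) <= s ^ k.
Proof.
  intros Hs. induction k as [|k IH]; [simpl; lra|].
  rewrite S_INR. cbn [pow]. assert (0 <= INR k) by apply pos_INR.
  assert (s * (1 - INR k * (1 - s)) <= s * s ^ k) by (apply Rmult_le_compat_l; lra).
  assert (0 <= INR k * ((1 - s) * (1 - s))) by (apply Rmult_le_pos; nra).
  lra.
Qed.

Lemma le_of_pow_bound (x y : R) k : 0 <= x ->
  (forall s, 0 < s < 1 -> x * s ^ k <= y) -> x <= y.
Proof.
  intros Hx Hbound. apply Rle_plus_epsilon. intros eps Heps.
  assert (0 <= INR k) by apply pos_INR.
  assert (Hxk : 0 <= x * INR k) by nra.
  set (delta := eps / (x * INR k + eps + 1)).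
  assert (Hdelta : 0 < delta < 1).
  { unfold delta. split; [apply Rdiv_lt_0_compat; lra|].
    apply (Rmult_lt_reg_r (x * INR k + eps + 1)); [lra|]. field_simplify; lra. }
  assert (Hxkd : x * INR k * delta <= eps).
  { unfold delta. apply (Rmult_le_reg_r (x * INR k + eps + 1)); [lra|].
    field_simplify; nra. }
  assert (Hpow := pow_ge_1_sub (1 - delta) k ltac:(lra)).
  assert (Hb := Hbound (1 - delta) ltac:(lra)).
  assert (x * (1 - INR k * (1 - (1 - delta))) <= x * (1 - delta) ^ k)
    by (apply Rmult_le_compat_l; lra).
  nra.
Qed.

Lemma geom_sum_lower_bound (s : R) n : 0 <= s < 1 ->
  INR (S n) * s ^ n <= (1 - s ^ S n) / (1 - s).
Proof.
  intros Hs. rewrite <- tech3 by lra.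
  replace (INR (S n) * s ^ n) with (sum_f_R0 (fun _ => s ^ n) n) by (rewrite sum_cte; ring).
  apply sum_Rle. intros k Hk.
  replace n with (k + (n - k))%nat at 1 by lia. rewrite pow_add.
  assert (s ^ (n - k) <= 1) by (rewrite <- (pow1 (n - k)); apply pow_incr; lra).
  assert (0 <= s ^ k) by (apply pow_le; lra).
  nra.
Qed.

Definition diffquot_coef (a : nat -> C) (s : R) (m : nat) : C :=
  (a (S m) * RtoC ((1 - s ^ S m) / (1 - s)))%C.

Lemma is_series_diffquot (a : nat -> C) (F : C -> C) (s : R) (z : C) :
  a 0%nat = 0%C ->
  (forall z, in_U z -> is_series (V := C_NormedModule) (fun n => (a n * z ^ n)%C) (F z)) ->
  0 <= s < 1 -> in_U z -> z <> 0%C ->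
  is_series (V := C_NormedModule) (fun m => (diffquot_coef a s m * z ^ m)%C)
    ((F z - F (RtoC s * z)) / (z - RtoC s * z))%C.
Proof.
  intros Ha0 HF Hs Hz Hz0.
  assert (HszU : in_U (RtoC s * z)%C).
  { unfold in_U in *. rewrite Cmod_mult, Cmod_R, Rabs_pos_eq by lra.
    assert (0 <= Cmod z) by apply Cmod_ge_0. nra. }
  assert (Hs1 : (1 - RtoC s)%C <> 0%C).
  { rewrite <- RtoC_minus. intros E. apply RtoC_inj in E. lra. }
  assert (Hdiff : is_series (V := C_NormedModule)
     (fun m => (a (S m) * z ^ S m - a (S m) * (RtoC s * z) ^ S m)%C) (F z - F (RtoC s * z))%C).
  { apply (is_series_incr_1 (fun n => (a n * z ^ n - a n * (RtoC s * z) ^ n)%C)).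
    assert (H := is_series_minus _ _ _ _ (HF z Hz) (HF _ HszU)).
    match goal with |- is_series _ ?l => replace l with (minus (F z) (F (RtoC s * z)%C)) end.
    - exact H.
    - rewrite Ha0. unfold minus, plus, opp; simpl.
      change (@eq C (F z + - F (RtoC s * z)) (F z - F (RtoC s * z) + (0 * 1 - 0 * 1)))%C. ring. }
  assert (Hzs : (z - RtoC s * z)%C <> 0%C).
  { replace (z - RtoC s * z)%C with ((1 - RtoC s) * z)%C by ring. now apply Cmult_neq_0. }
  apply (is_series_scal (/ (z - RtoC s * z))%C) in Hdiff.
  replace ((F z - F (RtoC s * z)) / (z - RtoC s * z))%C
    with (/ (z - RtoC s * z) * (F z - F (RtoC s * z)))%C by (unfold Cdiv; ring).
  refine (is_series_ext _ _ _ _ Hdiff). intros m.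
  unfold diffquot_coef, scal; simpl. unfold mult; simpl.
  rewrite Cpow_mult_l, RtoC_div, !RtoC_minus, RtoC_mult, RtoC_pow by lra.
  match goal with |- ?x = ?y => change (@eq C x y) end. field. now split.
Qed.

Lemma diffquot_coef_bound (a : nat -> C) (f : C -> C) (s : R) (n : nat) :
  normalized_series a f -> Re_deriv_pos_on_U f -> (1 <= n)%nat -> 0 < s < 1 ->
  Cmod (diffquot_coef a s n) * s ^ n <= 2.
Proof.
  intros [Ha0 [Ha1 Hser]] Hpos Hn Hs.
  assert (Hd0 : diffquot_coef a s 0 = 1%C).
  { unfold diffquot_coef. rewrite Ha1, pow_1.
    replace ((1 - s) / (1 - s)) with 1 by (field; lra). ring. }
  replace 2 with (2 * Re (diffquot_coef a s 0)) by (rewrite Hd0; simpl; ring).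
  apply Caratheodory_coef_bound; [exact Hn | lra | |].
  - intros z Hz.
    assert (HzU : in_U z) by (unfold in_U; lra).
    assert (Hz0 : z <> 0%C) by (apply Cmod_gt_0; lra).
    eexists. split; [exact (is_series_diffquot a f s z Ha0 Hser ltac:(lra) HzU Hz0)|].
    apply Rlt_le, Re_diffquot_pos; [exact Hpos | exact HzU | |].
    + unfold in_U. rewrite Cmod_mult, Cmod_R, Rabs_pos_eq by lra. nra.
    + intros E. apply (f_equal Cmod) in E.
      rewrite Cmod_mult, Cmod_R, Rabs_pos_eq, Hz in E by lra. nra.
  - set (rho := (1 + s) / 2).
    assert (HrhoU : in_U (RtoC rho)) by (unfold in_U; rewrite Cmod_R, Rabs_pos_eq; unfold rho; lra).
    assert (Hrho0 : RtoC rho <> 0%C) by (intros E; apply RtoC_inj in E; unfold rho in E; lra).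
    apply (ex_series_Cmod_pow _ rho s _ ltac:(unfold rho; lra)
      (is_series_diffquot a f s _ Ha0 Hser ltac:(lra) HrhoU Hrho0)).
Qed.

Theorem Re_deriv_pos_coef_bound (a : nat -> C) (f : C -> C) (n : nat) :
  normalized_series a f -> Re_deriv_pos_on_U f -> (2 <= n)%nat -> INR n * Cmod (a n) <= 2.
Proof.
  intros Hf Hpos Hn. destruct n as [|n]; [lia|].
  rewrite Rmult_comm. apply (le_of_pow_bound _ _ (2 * n)).
  { apply Rmult_le_pos; [apply Cmod_ge_0 | apply pos_INR]. }
  intros s Hs.
  assert (Hd := diffquot_coef_bound a f s n Hf Hpos ltac:(lia) Hs).
  unfold diffquot_coef in Hd.
  assert (Hq := geom_sum_lower_bound s n ltac:(lra)).
  rewrite Cmod_mult, Cmod_R, Rabs_pos_eq in Hd by (eapply Rle_trans; [|exact Hq];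
    apply Rmult_le_pos; [apply pos_INR | apply pow_le; lra]).
  assert (0 <= Cmod (a (S n))) by apply Cmod_ge_0.
  assert (0 <= s ^ n) by (apply pow_le; lra).
  replace (2 * n)%nat with (n + n)%nat by lia. rewrite pow_add.
  assert (Cmod (a (S n)) * (INR (S n) * s ^ n) <= Cmod (a (S n)) * ((1 - s ^ S n) / (1 - s)))
    by (apply Rmult_le_compat_l; assumption).
  nra.
Qed.

Theorem corollary4p6 (a : nat -> C) (f : C -> C) :
  in_H_sigma a f ->
  Cmod (a 2%nat * a 4%nat - a 3%nat * a 3%nat)%C <= 3 / 2.
Proof.
  intros [Hf [_ [Hpos _]]].
  assert (H2 := Re_deriv_pos_coef_bound a f 2 Hf Hpos ltac:(lia)).
  assert (H3 := Re_deriv_pos_coef_bound a f 3 Hf Hpos ltac:(lia)).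
  assert (H4 := Re_deriv_pos_coef_bound a f 4 Hf Hpos ltac:(lia)).
  simpl INR in H2, H3, H4.
  unfold Cminus. eapply Rle_trans; [apply Cmod_triangle|].
  rewrite Cmod_opp, !Cmod_mult.
  assert (0 <= Cmod (a 2%nat)) by apply Cmod_ge_0.
  assert (0 <= Cmod (a 3%nat)) by apply Cmod_ge_0.
  assert (0 <= Cmod (a 4%nat)) by apply Cmod_ge_0.
  nra.
Qed.
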